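(* Let $A\in(0,1)$, $M<0$, $Q>0$, $S>0$ and consider the planar system $$\frac{du}{d\tau}=u^2\big((u+A)(1-u)(u-M)-Qv\big),\qquad \frac{dv}{d\tau}=S(u+A)(u-v)v$$ on $\{u\ge0,\ v\ge0\}$, whose positive equilibria are the points $(u,u)$ with $u>0$ a root of $g(u)=u^3-Tu^2-Lu+AM$, where $T=1-A+M$ and $L=A(M+1)-Q-M$. Let $u^*\in(0,1)$ be a root of $g$ and $\Delta=(u^*-T)^2-4\big(u^*(u^*-T)-L\big)$. Then the positive roots of $g$ lie in $(0,1)$, and: (I) if $T\le 0$ or $L\ge 0$, then $g$ has exactly one positive root, so the system has one positive equilibrium; (II) if $T>0$ and $L<0$, then: (i) if $\Delta<0$, then $g$ has exactly one positive root, so the system has one positive equilibrium; (ii) if $\Delta\ge 0$, then $g$ has three positive roots counting multiplicity, namely $u^*$ and $u^*_\pm=\tfrac12\big(T-u^*\pm\sqrt{\Delta}\big)$, so the system has three positive equilibria counting multiplicity.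
   Context: A root $u^*\in(0,1)$ of $g$ always exists because $g(0)=AM<0<Q=g(1)$. $\Delta$ is the discriminant of the quadratic $u^2+(u^*-T)u+u^*(u^*-T)-L$, which equals $g(u)/(u-u^* )$. *)

From mathcomp Require Import all_boot all_order all_algebra.
Set Implicit Arguments. Unset Strict Implicit. Unset Printing Implicit Defensive.
Import Order.TTheory GRing.Theory Num.Theory.
Local Open Scope ring_scope.

Section Defs.
Variable R : rcfType.

Definition Tpar (A M : R) : R := 1 - A + M.
Definition Lpar (A M Q : R) : R := A * (M + 1) - Q - M.
Definition gpoly (A M Q u : R) : R :=
  u ^+ 3 - Tpar A M * u ^+ 2 - Lpar A M Q * u + A * M.

Definition field_u (A M Q : R) (u v : R) : R :=
  u ^+ 2 * ((u + A) * (1 - u) * (u - M) - Q * v).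
Definition field_v (A S : R) (u v : R) : R :=
  S * (u + A) * (u - v) * v.

Definition pos_equilibrium (A M Q S u v : R) : Prop :=
  0 < u /\ 0 < v /\ field_u A M Q u v = 0 /\ field_v A S u v = 0.

Definition Delta (A M Q ustar : R) : R :=
  (ustar - Tpar A M) ^+ 2 - 4 * (ustar * (ustar - Tpar A M) - Lpar A M Q).
End Defs.

(* Every positive equilibrium lies on the diagonal v = u, where the u-nullcline
   reduces to g(u) = 0.  For u >= 1 one has g(u) = (u + A)(u - 1)(u - M) + Q u > 0,
   so positive roots lie in (0,1).  Dividing g by u - u* leaves the monic
   quadratic q(u) = u^2 + (u* - T) u + c whose constant term c satisfies
   u* c = -A M > 0.  Hence q has no positive root when its coefficients are
   positive (case I) or when its discriminant Delta is negative (case II.i);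
   otherwise its roots have positive product c and positive sum T - u*, so both
   are positive (case II.ii). *)
From mathcomp Require Import all_boot all_order all_algebra.
From mathcomp Require Import ring lra.
Import Order.TTheory GRing.Theory Num.Theory.
Local Open Scope ring_scope.

Section MonicQuadratic.
Context {R : rcfType}.

Lemma monic_quadratic_factor (s c D r : R) :
  0 <= D -> D = s ^+ 2 - 4 * c ->
  r ^+ 2 - s * r + c = (r - (s + Num.sqrt D) / 2) * (r - (s - Num.sqrt D) / 2).
Proof.
move=> D_ge0 eD.
have -> : c = (s ^+ 2 - Num.sqrt D ^+ 2) / 4 by rewrite sqr_sqrtr // eD; field.
by field.
Qed.

Lemma monic_quadratic_roots_gt0 (s c D : R) :
  0 < s -> 0 < c -> 0 <= D -> D = s ^+ 2 - 4 * c ->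
  0 < (s - Num.sqrt D) / 2 /\ 0 < (s + Num.sqrt D) / 2.
Proof.
move=> s_gt0 c_gt0 D_ge0 eD.
have sqrtD_ge0 := sqrtr_ge0 D.
have sqrtD_sq := sqr_sqrtr D_ge0.
have sqrtD_lt_s : Num.sqrt D < s by nra.
by split; lra.
Qed.

End MonicQuadratic.

Section Equilibria.
Context {R : rcfType} {A M Q S : R}.

Local Notation T := (Tpar A M).
Local Notation L := (Lpar A M Q).
Local Notation g := (gpoly A M Q).

Definition gquot (us u : R) : R := u ^+ 2 + (us - T) * u + (us * (us - T) - L).

Lemma gpoly_div (us u : R) : g u = (u - us) * gquot us u + g us.
Proof. rewrite /gpoly /gquot; ring. Qed.

Lemma gquot_discr (us u : R) : 4 * gquot us u = (2 * u + us - T) ^+ 2 - Delta A M Q us.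
Proof. rewrite /gquot /Delta; ring. Qed.

Lemma u_nullcline_diag (u : R) : (u + A) * (1 - u) * (u - M) - Q * u = - g u.
Proof. rewrite /gpoly /Tpar /Lpar; ring. Qed.

Lemma pos_equilibriumP (u v : R) : 0 < A -> 0 < S ->
  pos_equilibrium A M Q S u v <-> 0 < u /\ v = u /\ g u = 0.
Proof.
move=> A_gt0 S_gt0; rewrite /pos_equilibrium /field_u /field_v; split.
- move=> [u_gt0 [v_gt0 [fu fv]]].
  have uA_neq0 : u + A != 0 by rewrite gt_eqF // addr_gt0.
  have vu : v = u.
    apply/esym/eqP; rewrite -subr_eq0.
    move/eqP: fv; rewrite !mulf_eq0 (gt_eqF S_gt0) (negbTE uA_neq0) (gt_eqF v_gt0).
    by rewrite orbF.
  split=> //; split=> //.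
  move/eqP: fu; rewrite vu u_nullcline_diag mulf_eq0 expf_eq0 (gt_eqF u_gt0).
  by rewrite oppr_eq0 => /eqP.
- move=> [u_gt0 [-> gu]]; do 2 split=> //; split.
  + by rewrite u_nullcline_diag gu oppr0 mulr0.
  + by rewrite subrr mulr0 mul0r.
Qed.

Lemma gpoly_gt0 (u : R) : 0 < A -> M < 0 -> 0 < Q -> 1 <= u -> 0 < g u.
Proof.
move=> A_gt0 M_lt0 Q_gt0 u_ge1.
have : 0 <= (u + A) * (u - 1) * (u - M) by apply: mulr_ge0; [apply: mulr_ge0|]; lra.
have : 0 < Q * u by apply: mulr_gt0; lra.
rewrite -[g u]opprK -u_nullcline_diag.
have -> : (u + A) * (1 - u) * (u - M) = - ((u + A) * (u - 1) * (u - M)) by ring.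
lra.
Qed.

Lemma gpoly_pos_root_lt1 (u : R) : 0 < A -> M < 0 -> 0 < Q -> g u = 0 -> u < 1.
Proof.
move=> A_gt0 M_lt0 Q_gt0 gu; rewrite ltNge; apply/negP.
by move/(gpoly_gt0 u A_gt0 M_lt0 Q_gt0); rewrite gu ltxx.
Qed.

Section Root.
Context {us : R} (hg : g us = 0).

(* Vieta: the product of the three roots of g is -A M. *)
Lemma gquot0_gt0 : 0 < A -> M < 0 -> 0 < us -> 0 < us * (us - T) - L.
Proof.
move=> A_gt0 M_lt0 us_gt0.
have AM_lt0 : A * M < 0 by rewrite pmulr_rlt0.
have : us * (us * (us - T) - L) = - (A * M).
  by rewrite -[LHS]subr0 -hg /gpoly; ring.
by rewrite -(pmulr_rgt0 _ us_gt0) => ->; rewrite oppr_gt0.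
Qed.

Lemma pos_root_unique :
  (forall r, 0 < r -> 0 < gquot us r) -> forall u, 0 < u -> g u = 0 -> u = us.
Proof.
move=> gquot_gt0 u u_gt0; rewrite (gpoly_div us) hg addr0 => /eqP.
by rewrite mulf_eq0 (gt_eqF (gquot_gt0 u u_gt0)) orbF subr_eq0 => /eqP.
Qed.

Lemma unique_pos_equilibrium : 0 < A -> 0 < S -> 0 < us ->
  (forall u, 0 < u -> g u = 0 -> u = us) ->
  (exists! u : R, 0 < u /\ g u = 0) /\
  (exists! p : R * R, pos_equilibrium A M Q S p.1 p.2).
Proof.
move=> A_gt0 S_gt0 us_gt0 uniq_root; split.
  by exists us; split=> // u [u_gt0 gu]; rewrite (uniq_root u u_gt0 gu).
exists (us, us); split; first exact/pos_equilibriumP.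
case=> a b /= /pos_equilibriumP [//|//|a_gt0 [-> ga]].
by rewrite (uniq_root a a_gt0 ga).
Qed.

Lemma gquot_gt0_of_coef (r : R) :
  0 < A -> M < 0 -> 0 < us -> 0 < us - T -> 0 < r -> 0 < gquot us r.
Proof.
move=> A_gt0 M_lt0 us_gt0 usT_gt0 r_gt0.
have := gquot0_gt0 A_gt0 M_lt0 us_gt0; rewrite /gquot.
have : 0 < (us - T) * r by apply: mulr_gt0.
have : 0 < r ^+ 2 by apply: exprn_gt0.
lra.
Qed.

Lemma Tpar_lt_root : 0 < A -> M < 0 -> 0 < us -> T <= 0 \/ 0 <= L -> 0 < us - T.
Proof.
move=> A_gt0 M_lt0 us_gt0 [T_le0 | L_ge0]; first lra.
have := gquot0_gt0 A_gt0 M_lt0 us_gt0; rewrite -[_ < us - T](pmulr_rgt0 _ us_gt0); lra.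
Qed.

Lemma gquot_gt0_of_Delta_lt0 (r : R) : Delta A M Q us < 0 -> 0 < gquot us r.
Proof.
move=> D_lt0; have := gquot_discr us r.
have := sqr_ge0 (2 * r + us - T); lra.
Qed.

(* The roots of q have product c > 0 and sum T - u*; if that sum were <= 0, then
   c = u* (u* - T) - L > u* (u* - T) >= (u* - T)^2 (using T > 0, L < 0), and the
   discriminant (u* - T)^2 - 4 c would be negative. *)
Lemma root_lt_Tpar : 0 < A -> M < 0 -> 0 < us ->
  0 < T -> L < 0 -> 0 <= Delta A M Q us -> 0 < T - us.
Proof.
move=> A_gt0 M_lt0 us_gt0 T_gt0 L_lt0; rewrite /Delta => D_ge0.
have c_gt0 := gquot0_gt0 A_gt0 M_lt0 us_gt0.
rewrite ltNge; apply/negP => usT_le0; nra.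
Qed.

Lemma gquot_factor (u : R) : 0 <= Delta A M Q us ->
  gquot us u = (u - (T - us + Num.sqrt (Delta A M Q us)) / 2) *
               (u - (T - us - Num.sqrt (Delta A M Q us)) / 2).
Proof.
move=> D_ge0.
have -> : gquot us u = u ^+ 2 - (T - us) * u + (us * (us - T) - L).
  by rewrite /gquot; ring.
by apply: monic_quadratic_factor => //; rewrite /Delta; ring.
Qed.

End Root.
End Equilibria.

Theorem lemma1 (R : rcfType) (A M Q S ustar : R)
  (hA0 : 0 < A) (hA1 : A < 1) (hM : M < 0) (hQ : 0 < Q) (hS : 0 < S)
  (hu0 : 0 < ustar) (hu1 : ustar < 1) (hg : gpoly A M Q ustar = 0) :
  (* the positive equilibria are exactly the points (u,u) with u>0 a root of g *)
  (forall u v : R, pos_equilibrium A M Q S u v <-> (0 < u /\ v = u /\ gpoly A M Q u = 0)) /\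
  (* positive roots of g lie in (0,1) *)
  (forall u : R, 0 < u -> gpoly A M Q u = 0 -> u < 1) /\
  (* (I) *)
  ((Tpar A M <= 0 \/ 0 <= Lpar A M Q) ->
     (exists! u : R, 0 < u /\ gpoly A M Q u = 0) /\
     (exists! p : R * R, pos_equilibrium A M Q S p.1 p.2)) /\
  (* (II) *)
  ((0 < Tpar A M /\ Lpar A M Q < 0) ->
     (* (i) *)
     (Delta A M Q ustar < 0 ->
        (exists! u : R, 0 < u /\ gpoly A M Q u = 0) /\
        (exists! p : R * R, pos_equilibrium A M Q S p.1 p.2)) /\
     (* (ii) *)
     (0 <= Delta A M Q ustar ->
        let up := (Tpar A M - ustar + Num.sqrt (Delta A M Q ustar)) / 2 in
        let um := (Tpar A M - ustar - Num.sqrt (Delta A M Q ustar)) / 2 in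
        0 < um /\ 0 < up /\
        (forall u : R, gpoly A M Q u = (u - ustar) * (u - up) * (u - um)) /\
        (forall u v : R, pos_equilibrium A M Q S u v <->
           (v = u /\ (u = ustar \/ u = up \/ u = um))))).
Proof.
split; first by move=> u v; exact: pos_equilibriumP.
split; first by move=> u _; exact: gpoly_pos_root_lt1.
split.
  move=> hTL; apply: (unique_pos_equilibrium hg) => //.
  apply: (pos_root_unique hg) => r r_gt0.
  by apply: (gquot_gt0_of_coef hg) => //; apply: (Tpar_lt_root hg).
move=> [hT hL]; split.
  move=> hD; apply: (unique_pos_equilibrium hg) => //.
  by apply: (pos_root_unique hg) => r _; apply: gquot_gt0_of_Delta_lt0.
move=> hD up um.
have s_gt0 := root_lt_Tpar hg hA0 hM hu0 hT hL hD.
have c_gt0 := gquot0_gt0 hg hA0 hM hu0.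
have [um_gt0 up_gt0] : 0 < um /\ 0 < up.
  rewrite /um /up; apply: (monic_quadratic_roots_gt0 _ _ _ s_gt0 c_gt0 hD).
  by rewrite /Delta; ring.
have g_factor u : gpoly A M Q u = (u - ustar) * (u - up) * (u - um).
  by rewrite (gpoly_div ustar) hg addr0 -mulrA gquot_factor.
do 3 split=> //.
move=> u v; rewrite pos_equilibriumP // g_factor; split.
- move=> [u_gt0 [-> /eqP]]; rewrite !mulf_eq0 !subr_eq0.
  by case/orP=> [/orP[]|] /eqP; tauto.
- move=> [-> root_u]; split; first by case: root_u => [->|[->|->]].
  by split=> //; case: root_u => [->|[->|->]]; rewrite subrr ?mulr0 ?mul0r.
Qed.
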